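(* Let $(\mathcal{A},\mathbb{W},\mathfrak{s})$ be a weakly extriangulated category in which every inflation is a monomorphism and every deflation is an epimorphism. Let $\mathcal{W}$ be the class of conflations, i.e. of all sequences $A\xrightarrow{f}B\xrightarrow{g}C$ representing $\mathfrak{s}(\delta)$ for some $\delta\in\mathbb{W}(C,A)$. Then $\mathcal{W}$ is a weakly exact structure on $\mathcal{A}$.
   Context: Let $\mathcal{A}$ be an additive category. A weakly exact structure on $\mathcal{A}$ is a class $\mathcal{W}$ of kernel-cokernel pairs $A\xrightarrow{i}B\xrightarrow{d}C$ ($i$ a kernel of $d$, $d$ a cokernel of $i$), closed under isomorphisms and finite direct sums of sequences, with $1_A$ an admissible monic and an admissible epic for all $A$, such that pushouts of admissible monics (first maps of sequences in $\mathcal{W}$) along arbitrary morphisms exist and are admissible monics and pullbacks of admissible epics (second maps) along arbitrary morphisms exist and are admissible epics. For an additive bifunctor $\mathbb{E}:\mathcal{A}^{op}\times\mathcal{A}\to\mathrm{Ab}$ and $\delta\in\mathbb{E}(C,A)$, write $a_*\delta=\mathbb{E}(C,a)(\delta)$, $c^*\delta=\mathbb{E}(c,A)(\delta)$; a morphism of extensions is a pair $(a,c)$ with $a_*\delta=c^*\rho$. $g:B\to C$ is a weak cokernel of $f:A\to B$ if $\mathrm{Hom}(C,X)\to\mathrm{Hom}(B,X)\to\mathrm{Hom}(A,X)$ is exact for all $X$; weak kernels dually; a weak kernel-cokernel pair is $A\xrightarrow{f}B\xrightarrow{g}C$ with $f$ a weak kernel of $g$ and $g$ a weak cokernel of $f$.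 Two such pairs with the same end terms are equivalent if there is an isomorphism $b$ of middle terms with $(1_A,b,1_C)$ a chain map. A realization $\mathfrak{s}$ assigns to each $\delta\in\mathbb{E}(C,A)$ an equivalence class $[A\xrightarrow{f}B\xrightarrow{g}C]$ such that (R0) every morphism of extensions lifts to a chain map $(a,b,c)$ between representatives. It is exact if (R1) for each representative the sequences $\mathrm{Hom}(C,-)\to\mathrm{Hom}(B,-)\to\mathrm{Hom}(A,-)\xrightarrow{a\mapsto a_*\delta}\mathbb{E}(C,-)$ and $\mathrm{Hom}(-,A)\to\mathrm{Hom}(-,B)\to\mathrm{Hom}(-,C)\xrightarrow{c\mapsto c^*\delta}\mathbb{E}(-,A)$ are exact, and (R2) the zero elements of $\mathbb{E}(0,A)$, $\mathbb{E}(A,0)$ are realized by $[A\xrightarrow{1}A\to0]$, $[0\to A\xrightarrow{1}A]$. The mapping cone of a chain map $(1_A,b,c)$ from $A\xrightarrow{f}B\xrightarrow{g}C$ to $A\xrightarrow{f'}B'\xrightarrow{g'}C'$ is $B\xrightarrow{\left[\begin{smallmatrix}-g\\ b\end{smallmatrix}\right]}C\oplus B'\xrightarrow{[c\ \ g']}C'$; mapping cocones of $(a,b,1_C)$ dually. A weakly extriangulated category is $(\mathcal{A},\mathbb{E},\mathfrak{s})$ with $\mathfrak{s}$ an exact realization satisfying (EA2): for $\rho\in\mathbb{E}(C',A)$, $c:C\to C'$, realizations $A\xrightarrow{f}B\xrightarrow{g}C$ of $c^*\rho$ and $A\xrightarrow{f'}B'\xrightarrow{g'}C'$ of $\rho$,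 there is $b$ with $(1_A,b,c)$ a chain map whose mapping cone realizes $f_*\rho$; and the dual (EA2)$^{op}$. Conflations are representatives of classes $\mathfrak{s}(\delta)$; inflations and deflations are their first and second morphisms. *)

From HB Require Import structures.
From mathcomp Require Import all_boot all_algebra.
Set Implicit Arguments. Unset Strict Implicit. Unset Printing Implicit Defensive.
Import GRing.Theory.
Local Open Scope ring_scope.

Unset Implicit Arguments.
Record AddCat := {
  Obj :> Type;
  Hom : Obj -> Obj -> zmodType;
  comp : forall A B C : Obj, Hom B C -> Hom A B -> Hom A C;
  idm : forall A : Obj, Hom A A;
  compA : forall (A B C D : Obj) (h : Hom C D) (g : Hom B C) (f : Hom A B),
      comp A B D (comp B C D h g) f = comp A C D h (comp A B C g f);
  comp1m : forall (A B : Obj) (f : Hom A B), comp A B B (idm B) f = f;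
  compm1 : forall (A B : Obj) (f : Hom A B), comp A A B f (idm A) = f;
  compDl : forall (A B C : Obj) (g g' : Hom B C) (f : Hom A B),
      comp A B C (g + g') f = comp A B C g f + comp A B C g' f;
  compDr : forall (A B C : Obj) (g : Hom B C) (f f' : Hom A B),
      comp A B C g (f + f') = comp A B C g f + comp A B C g f';
  zobj : Obj;
  zobj_src : forall (X : Obj) (f : Hom zobj X), f = 0;
  zobj_tgt : forall (X : Obj) (f : Hom X zobj), f = 0;
  bsum : Obj -> Obj -> Obj;
  bin1 : forall X Y : Obj, Hom X (bsum X Y);
  bin2 : forall X Y : Obj, Hom Y (bsum X Y);
  bpr1 : forall X Y : Obj, Hom (bsum X Y) X;
  bpr2 : forall X Y : Obj, Hom (bsum X Y) Y;
  bpr1in1 : forall X Y : Obj, comp X (bsum X Y) X (bpr1 X Y) (bin1 X Y) = idm X;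
  bpr2in2 : forall X Y : Obj, comp Y (bsum X Y) Y (bpr2 X Y) (bin2 X Y) = idm Y;
  bpr1in2 : forall X Y : Obj, comp Y (bsum X Y) X (bpr1 X Y) (bin2 X Y) = 0;
  bpr2in1 : forall X Y : Obj, comp X (bsum X Y) Y (bpr2 X Y) (bin1 X Y) = 0;
  bsum_id : forall X Y : Obj,
      comp (bsum X Y) X (bsum X Y) (bin1 X Y) (bpr1 X Y)
      + comp (bsum X Y) Y (bsum X Y) (bin2 X Y) (bpr2 X Y) = idm (bsum X Y)
}.

Arguments Hom {a}.
Arguments comp {a A B C}.
Arguments idm {a}.
Arguments zobj {a}.
Arguments bsum {a}.
Arguments bin1 {a X Y}.
Arguments bin2 {a X Y}.
Arguments bpr1 {a X Y}.
Arguments bpr2 {a X Y}.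

Notation "g \oc f" := (comp g f) (at level 40, left associativity).

(* An additive bifunctor E : A^op x A -> Ab; Ex C A = E(C,A),
   Epush a = E(C,a) = a_*, Epull c = E(c,A) = c^*. *)
Record AddBifunctor (Ac : AddCat) := {
  Ex : Ac -> Ac -> zmodType;
  Epush : forall C A A' : Ac, Hom A A' -> Ex C A -> Ex C A';
  Epull : forall C' C A : Ac, Hom C' C -> Ex C A -> Ex C' A;
  Epush_add : forall (C A A' : Ac) (a : Hom A A') (x y : Ex C A),
      Epush C A A' a (x + y) = Epush C A A' a x + Epush C A A' a y;
  Epull_add : forall (C' C A : Ac) (c : Hom C' C) (x y : Ex C A),
      Epull C' C A c (x + y) = Epull C' C A c x + Epull C' C A c y;
  Epush_addm : forall (C A A' : Ac) (a a' : Hom A A') (x : Ex C A),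
      Epush C A A' (a + a') x = Epush C A A' a x + Epush C A A' a' x;
  Epull_addm : forall (C' C A : Ac) (c c' : Hom C' C) (x : Ex C A),
      Epull C' C A (c + c') x = Epull C' C A c x + Epull C' C A c' x;
  Epush_id : forall (C A : Ac) (x : Ex C A), Epush C A A (idm A) x = x;
  Epull_id : forall (C A : Ac) (x : Ex C A), Epull C C A (idm C) x = x;
  Epush_comp : forall (C A A' A'' : Ac) (a : Hom A A') (a' : Hom A' A'') (x : Ex C A),
      Epush C A A'' (a' \oc a) x = Epush C A' A'' a' (Epush C A A' a x);
  Epull_comp : forall (C'' C' C A : Ac) (c' : Hom C'' C') (c : Hom C' C) (x : Ex C A),
      Epull C'' C A (c \oc c') x = Epull C'' C' A c' (Epull C' C A c x);
  Epush_pull : forall (C' C A A' : Ac) (c : Hom C' C) (a : Hom A A') (x : Ex C A),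
      Epush C' A A' a (Epull C' C A c x) = Epull C' C A' c (Epush C A A' a x)
}.

Set Implicit Arguments.
Arguments Ex {Ac}.
Arguments Epush {Ac a0 C A A'}.
Arguments Epull {Ac a0 C' C A}.

Section Defs.
Variable Ac : AddCat.

Definition is_mono (A B : Ac) (f : Hom A B) :=
  forall (X : Ac) (u v : Hom X A), f \oc u = f \oc v -> u = v.
Definition is_epi (B C : Ac) (g : Hom B C) :=
  forall (X : Ac) (u v : Hom C X), u \oc g = v \oc g -> u = v.
Definition is_iso (A B : Ac) (f : Hom A B) :=
  exists g : Hom B A, g \oc f = idm A /\ f \oc g = idm B.

Definition is_kernel (A B C : Ac) (i : Hom A B) (d : Hom B C) :=
  d \oc i = 0 /\
  forall (X : Ac) (h : Hom X B), d \oc h = 0 -> exists! u : Hom X A, i \oc u = h.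
Definition is_cokernel (A B C : Ac) (d : Hom B C) (i : Hom A B) :=
  d \oc i = 0 /\
  forall (X : Ac) (h : Hom B X), h \oc i = 0 -> exists! u : Hom C X, u \oc d = h.
Definition is_kc_pair (A B C : Ac) (i : Hom A B) (d : Hom B C) :=
  is_kernel i d /\ is_cokernel d i.

Definition is_weak_cokernel (A B C : Ac) (g : Hom B C) (f : Hom A B) :=
  forall (X : Ac) (h : Hom B X), h \oc f = 0 <-> exists k : Hom C X, h = k \oc g.
Definition is_weak_kernel (A B C : Ac) (f : Hom A B) (g : Hom B C) :=
  forall (X : Ac) (h : Hom X B), g \oc h = 0 <-> exists k : Hom X A, h = f \oc k.
Definition is_weak_kc_pair (A B C : Ac) (f : Hom A B) (g : Hom B C) :=
  is_weak_kernel f g /\ is_weak_cokernel g f.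

Definition seq_class := forall A B C : Ac, Hom A B -> Hom B C -> Prop.

Definition dsum_map (A A' B B' : Ac) (f : Hom A B) (f' : Hom A' B') :
  Hom (bsum A A') (bsum B B') :=
  bin1 \oc f \oc bpr1 + bin2 \oc f' \oc bpr2.

Definition adm_monic (W : seq_class) (A B : Ac) (i : Hom A B) :=
  exists (C : Ac) (d : Hom B C), W A B C i d.
Definition adm_epic (W : seq_class) (B C : Ac) (d : Hom B C) :=
  exists (A : Ac) (i : Hom A B), W A B C i d.

Definition is_pushout (A B A' B' : Ac) (i : Hom A B) (a : Hom A A')
    (i' : Hom A' B') (b : Hom B B') :=
  i' \oc a = b \oc i /\
  forall (X : Ac) (u : Hom B X) (v : Hom A' X), u \oc i = v \oc a ->
    exists! w : Hom B' X, w \oc b = u /\ w \oc i' = v.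

Definition is_pullback (B C C' B' : Ac) (d : Hom B C) (c : Hom C' C)
    (d' : Hom B' C') (b : Hom B' B) :=
  d \oc b = c \oc d' /\
  forall (X : Ac) (u : Hom X B) (v : Hom X C'), d \oc u = c \oc v ->
    exists! w : Hom X B', b \oc w = u /\ d' \oc w = v.

Definition weakly_exact (W : seq_class) :=
  (forall (A B C : Ac) (f : Hom A B) (g : Hom B C), W A B C f g -> is_kc_pair f g) /\
  (forall (A B C A' B' C' : Ac) (f : Hom A B) (g : Hom B C)
          (f' : Hom A' B') (g' : Hom B' C') (a : Hom A A') (b : Hom B B') (c : Hom C C'),
      W A B C f g -> is_iso a -> is_iso b -> is_iso c ->
      b \oc f = f' \oc a -> c \oc g = g' \oc b -> W A' B' C' f' g') /\
  (forall (A B C A' B' C' : Ac) (f : Hom A B) (g : Hom B C)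
          (f' : Hom A' B') (g' : Hom B' C'),
      W A B C f g -> W A' B' C' f' g' ->
      W (bsum A A') (bsum B B') (bsum C C') (dsum_map f f') (dsum_map g g')) /\
  (forall A : Ac, adm_monic W (idm A)) /\
  (forall A : Ac, adm_epic W (idm A)) /\
  (forall (A B A' : Ac) (i : Hom A B) (a : Hom A A'), adm_monic W i ->
     (exists (B' : Ac) (i' : Hom A' B') (b : Hom B B'), is_pushout i a i' b) /\
     (forall (B' : Ac) (i' : Hom A' B') (b : Hom B B'),
         is_pushout i a i' b -> adm_monic W i')) /\
  (forall (B C C' : Ac) (d : Hom B C) (c : Hom C' C), adm_epic W d ->
     (exists (B' : Ac) (d' : Hom B' C') (b : Hom B' B), is_pullback d c d' b) /\
     (forall (B' : Ac) (d' : Hom B' C') (b : Hom B' B),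
         is_pullback d c d' b -> adm_epic W d')).

Variable E : AddBifunctor Ac.

(* A realization is encoded as the relation "f, g represent s(delta)",
   i.e. s(delta) is the class of all (B, f, g) related to delta. *)
Definition realization :=
  forall (A C : Ac) (delta : Ex E C A) (B : Ac), Hom A B -> Hom B C -> Prop.

Definition realizes (s : realization) (A B C : Ac) (delta : Ex E C A)
  (f : Hom A B) (g : Hom B C) := s A C delta B f g.

Definition equiv_seq (A B B' C : Ac) (f : Hom A B) (g : Hom B C)
  (f' : Hom A B') (g' : Hom B' C) :=
  exists b : Hom B B', is_iso b /\ b \oc f = f' /\ g' \oc b = g.

(* s assigns to each delta an equivalence class of weak kernel-cokernel
   pairs, and satisfies (R0) *)
Definition is_realization (s : realization) :=
  (forall (A C : Ac) (delta : Ex E C A),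
      exists (B : Ac) (f : Hom A B) (g : Hom B C), realizes s delta f g) /\
  (forall (A B C : Ac) (delta : Ex E C A) (f : Hom A B) (g : Hom B C),
      realizes s delta f g -> is_weak_kc_pair f g) /\
  (forall (A B B' C : Ac) (delta : Ex E C A) (f : Hom A B) (g : Hom B C)
          (f' : Hom A B') (g' : Hom B' C),
      realizes s delta f g -> realizes s delta f' g' -> equiv_seq f g f' g') /\
  (forall (A B B' C : Ac) (delta : Ex E C A) (f : Hom A B) (g : Hom B C)
          (f' : Hom A B') (g' : Hom B' C),
      realizes s delta f g -> equiv_seq f g f' g' -> realizes s delta f' g') /\
  (forall (A C A' C' : Ac) (delta : Ex E C A) (rho : Ex E C' A')
          (a : Hom A A') (c : Hom C C'),
      Epush a delta = Epull c rho ->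
      forall (B B' : Ac) (f : Hom A B) (g : Hom B C) (f' : Hom A' B') (g' : Hom B' C'),
        realizes s delta f g -> realizes s rho f' g' ->
        exists b : Hom B B', b \oc f = f' \oc a /\ g' \oc b = c \oc g).

Definition is_exact_realization (s : realization) :=
  is_realization s /\
  (forall (A B C : Ac) (delta : Ex E C A) (f : Hom A B) (g : Hom B C),
     realizes s delta f g -> forall X : Ac,
       (forall h : Hom B X, h \oc f = 0 <-> exists k : Hom C X, h = k \oc g) /\
       (forall a : Hom A X, Epush a delta = 0 <-> exists h : Hom B X, a = h \oc f) /\
       (forall h : Hom X B, g \oc h = 0 <-> exists k : Hom X A, h = f \oc k) /\
       (forall c : Hom X C, Epull c delta = 0 <-> exists h : Hom X B, c = g \oc h)) /\
  (forall A : Ac, realizes s (0 : Ex E zobj A) (idm A) (0 : Hom A zobj)) /\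
  (forall A : Ac, realizes s (0 : Ex E A zobj) (0 : Hom zobj A) (idm A)).

(* mapping cone of (1_A, b, c) from A-f->B-g->C to A-f'->B'-g'->C' :
   B -[-g; b]-> C (+) B' -[c g']-> C' *)
Definition cone_l (B C B' : Ac) (g : Hom B C) (b : Hom B B') : Hom B (bsum C B') :=
  bin1 \oc (- g) + bin2 \oc b.
Definition cone_r (C B' C' : Ac) (c : Hom C C') (g' : Hom B' C') : Hom (bsum C B') C' :=
  c \oc bpr1 + g' \oc bpr2.
(* mapping cocone of (a, b, 1_C) from A-f->B-g->C to A'-f'->B'-g'->C :
   A -[-f; a]-> B (+) A' -[b f']-> B' *)
Definition cocone_l (A B A' : Ac) (f : Hom A B) (a : Hom A A') : Hom A (bsum B A') :=
  bin1 \oc (- f) + bin2 \oc a.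
Definition cocone_r (B A' B' : Ac) (b : Hom B B') (f' : Hom A' B') : Hom (bsum B A') B' :=
  b \oc bpr1 + f' \oc bpr2.

Definition weakly_extriangulated (s : realization) :=
  is_exact_realization s /\
  (forall (A C C' : Ac) (rho : Ex E C' A) (c : Hom C C')
          (B B' : Ac) (f : Hom A B) (g : Hom B C) (f' : Hom A B') (g' : Hom B' C'),
      realizes s (Epull c rho) f g -> realizes s rho f' g' ->
      exists b : Hom B B', b \oc f = f' \oc idm A /\ g' \oc b = c \oc g /\
        realizes s (Epush f rho) (cone_l g b) (cone_r c g')) /\
  (forall (A A' C : Ac) (delta : Ex E C A) (a : Hom A A')
          (B B' : Ac) (f : Hom A B) (g : Hom B C) (f' : Hom A' B') (g' : Hom B' C),
      realizes s delta f g -> realizes s (Epush a delta) f' g' ->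
      exists b : Hom B B', b \oc f = f' \oc a /\ g' \oc b = idm C \oc g /\
        realizes s (Epull g' delta) (cocone_l f a) (cocone_r b f')).

Definition is_inflation (s : realization) (A B : Ac) (f : Hom A B) :=
  exists (C : Ac) (delta : Ex E C A) (g : Hom B C), realizes s delta f g.
Definition is_deflation (s : realization) (B C : Ac) (g : Hom B C) :=
  exists (A : Ac) (delta : Ex E C A) (f : Hom A B), realizes s delta f g.

Definition conflations (s : realization) : seq_class :=
  fun A B C f g => exists delta : Ex E C A, realizes s delta f g.

End Defs.

From Pilot Require Import Defs.
From mathcomp Require Import ssreflect ssrfun ssrbool ssralg.
Set Implicit Arguments.
Import GRing.Theory.
Local Open Scope ring_scope.

(* After the elementary calculus of additive categories, the key fact is the
   rigidity of weak kernel-cokernel pairs: an endomorphism of the middle term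
   fixing both maps is invertible, since its difference with the identity
   squares to zero.  Hence comparison maps going both ways between such pairs
   are isomorphisms.  The axioms of a weakly exact structure are then checked
   one at a time: conflations are kernel-cokernel pairs (mono/epi hypotheses);
   they are closed under isomorphisms and direct sums ((R0) plus rigidity);
   identities are conflations (R2); (EA2)^op and (EA2) build pushouts of
   inflations and pullbacks of deflations along conflations, and uniqueness of
   pushouts and pullbacks up to isomorphism makes every such side admissible. *)

Section AdditiveCalculus.
Context {Ac : AddCat}.

Lemma comp0m {A B C : Ac} (f : Hom A B) : (0 : Hom B C) \oc f = 0.
Proof.
have H := compDl Ac A B C 0 0 f; rewrite addr0 in H.
by apply: (addrI (0 \oc f)); rewrite addr0 -H.
Qed.

Lemma compm0 {A B C : Ac} (g : Hom B C) : g \oc (0 : Hom A B) = 0.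
Proof.
have H := compDr Ac A B C g 0 0; rewrite addr0 in H.
by apply: (addrI (g \oc 0)); rewrite addr0 -H.
Qed.

Lemma compNm {A B C : Ac} (g : Hom B C) (f : Hom A B) : (- g) \oc f = - (g \oc f).
Proof. by apply: (addrI (g \oc f)); rewrite -compDl !subrr comp0m. Qed.

Lemma compmN {A B C : Ac} (g : Hom B C) (f : Hom A B) : g \oc (- f) = - (g \oc f).
Proof. by apply: (addrI (g \oc f)); rewrite -compDr !subrr compm0. Qed.

Lemma compBl {A B C : Ac} (g g' : Hom B C) (f : Hom A B) :
  (g - g') \oc f = g \oc f - g' \oc f.
Proof. by rewrite compDl compNm. Qed.

Lemma compBr {A B C : Ac} (g : Hom B C) (f f' : Hom A B) :
  g \oc (f - f') = g \oc f - g \oc f'.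
Proof. by rewrite compDr compmN. Qed.

Lemma pr1_in1 {X Y Z : Ac} (f : Hom Z X) : bpr1 \oc (bin1 \oc f : Hom Z (bsum X Y)) = f.
Proof. by rewrite -Defs.compA bpr1in1 comp1m. Qed.

Lemma pr2_in2 {X Y Z : Ac} (f : Hom Z Y) : bpr2 \oc (bin2 \oc f : Hom Z (bsum X Y)) = f.
Proof. by rewrite -Defs.compA bpr2in2 comp1m. Qed.

Lemma pr1_in2 {X Y Z : Ac} (f : Hom Z Y) : bpr1 \oc (bin2 \oc f : Hom Z (bsum X Y)) = 0.
Proof. by rewrite -Defs.compA bpr1in2 comp0m. Qed.

Lemma pr2_in1 {X Y Z : Ac} (f : Hom Z X) : bpr2 \oc (bin1 \oc f : Hom Z (bsum X Y)) = 0.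
Proof. by rewrite -Defs.compA bpr2in1 comp0m. Qed.

Lemma bsum_eta_in {X Y Z : Ac} (h : Hom Z (bsum X Y)) :
  bin1 \oc (bpr1 \oc h) + bin2 \oc (bpr2 \oc h) = h.
Proof. by rewrite -!Defs.compA -compDl bsum_id comp1m. Qed.

Lemma bsum_eta_out {X Y Z : Ac} (h : Hom (bsum X Y) Z) :
  h \oc bin1 \oc bpr1 + h \oc bin2 \oc bpr2 = h.
Proof. by rewrite !Defs.compA -compDr bsum_id compm1. Qed.

Lemma dsum_in1 {A B A' B' : Ac} (f : Hom A B) (f' : Hom A' B') :
  dsum_map f f' \oc bin1 = bin1 \oc f.
Proof.
by rewrite /dsum_map compDl !Defs.compA bpr1in1 bpr2in1 compm1 !compm0 addr0.
Qed.

Lemma dsum_in2 {A B A' B' : Ac} (f : Hom A B) (f' : Hom A' B') :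
  dsum_map f f' \oc bin2 = bin2 \oc f'.
Proof.
by rewrite /dsum_map compDl !Defs.compA bpr1in2 bpr2in2 compm1 !compm0 add0r.
Qed.

Lemma pr1_dsum {A B A' B' : Ac} (f : Hom A B) (f' : Hom A' B') :
  bpr1 \oc dsum_map f f' = f \oc bpr1.
Proof. by rewrite /dsum_map compDr !Defs.compA pr1_in1 pr1_in2 addr0. Qed.

Lemma pr2_dsum {A B A' B' : Ac} (f : Hom A B) (f' : Hom A' B') :
  bpr2 \oc dsum_map f f' = f' \oc bpr2.
Proof. by rewrite /dsum_map compDr !Defs.compA pr2_in1 pr2_in2 add0r. Qed.

Lemma iso_comp {X Y Z : Ac} (u : Hom X Y) (v : Hom Y Z) :
  is_iso u -> is_iso v -> is_iso (v \oc u).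
Proof.
move=> [ui [ui1 ui2]] [vi [vi1 vi2]]; exists (ui \oc vi); split.
- by rewrite Defs.compA -(Defs.compA _ _ _ _ _ vi) vi1 comp1m ui1.
- by rewrite Defs.compA -(Defs.compA _ _ _ _ _ u) ui2 comp1m vi2.
Qed.

Lemma iso_of_iso_composites {X Y : Ac} (u : Hom X Y) (v : Hom Y X) :
  is_iso (v \oc u) -> is_iso (u \oc v) -> is_iso u.
Proof.
move=> [x [x1 x2]] [y [y1 y2]].
have left_inv : (x \oc v) \oc u = idm X by rewrite Defs.compA.
have right_inv : u \oc (v \oc y) = idm Y by rewrite -Defs.compA.
exists (x \oc v); split => //.
have -> : x \oc v = v \oc y.
  by rewrite -[x \oc v]compm1 -right_inv -Defs.compA left_inv comp1m.
exact: right_inv.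
Qed.

Definition wkc_pair {A B C : Ac} (f : Hom A B) (g : Hom B C) :=
  g \oc f = 0 /\
  (forall (X : Ac) (h : Hom B X), h \oc f = 0 -> exists k : Hom C X, h = k \oc g) /\
  (forall (X : Ac) (h : Hom X B), g \oc h = 0 -> exists k : Hom X A, h = f \oc k).

Lemma wkc_pair_of_weak {A B C : Ac} (f : Hom A B) (g : Hom B C) :
  is_weak_kc_pair f g -> wkc_pair f g.
Proof.
move=> [Hk Hc].
have gf : g \oc f = 0 by apply/(Hc C g); exists (idm C); rewrite comp1m.
by split=> //; split=> X h; [move/Hc | move/Hk].
Qed.

(* Rigidity: an endomorphism e of the middle term with e f = f and g e = g is
   invertible, since h := e - 1 satisfies h f = 0 = g h, hence h h = 0. *)
Lemma wkc_endo_iso {A B C : Ac} (f : Hom A B) (g : Hom B C) (e : Hom B B) :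
  wkc_pair f g -> e \oc f = f -> g \oc e = g -> is_iso e.
Proof.
move=> [gf [Hco Hk]] ef ge.
pose h := e - idm B.
have hf : h \oc f = 0 by rewrite /h compBl comp1m ef subrr.
have gh : g \oc h = 0 by rewrite /h compBr compm1 ge subrr.
have [k hk] := Hco _ _ hf.
have [k' hk'] := Hk _ _ gh.
have hh : h \oc h = 0.
  by rewrite {1}hk {1}hk' Defs.compA -(Defs.compA _ _ _ _ _ g) gf comp0m compm0.
have -> : e = h + idm B by rewrite /h subrK.
clearbody h; exists (idm B - h); split.
- by rewrite compBl !compDr hh !comp1m compm1 add0r [h + _]addrC addrK.
- by rewrite compBr !compDl hh !comp1m compm1 add0r [h + _]addrC addrK.
Qed.

Lemma wkc_comparison_iso {A B C A' B' C' : Ac}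
    (f : Hom A B) (g : Hom B C) (f' : Hom A' B') (g' : Hom B' C')
    (u : Hom B B') (v : Hom B' B) :
  wkc_pair f g -> wkc_pair f' g' ->
  v \oc u \oc f = f -> g \oc (v \oc u) = g ->
  u \oc v \oc f' = f' -> g' \oc (u \oc v) = g' -> is_iso u.
Proof.
move=> W W' vuf gvu uvf guv.
apply: (iso_of_iso_composites u v).
- exact: wkc_endo_iso W vuf gvu.
- exact: wkc_endo_iso W' uvf guv.
Qed.

Lemma wkc_dsum {A B C A' B' C' : Ac} (f : Hom A B) (g : Hom B C)
    (f' : Hom A' B') (g' : Hom B' C') :
  wkc_pair f g -> wkc_pair f' g' -> wkc_pair (dsum_map f f') (dsum_map g g').
Proof.
move=> [gf [Hc Hk]] [gf' [Hc' Hk']]; split; [|split].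
- rewrite {1}/dsum_map compDl !Defs.compA pr1_dsum pr2_dsum.
  rewrite -(Defs.compA _ _ _ _ _ g f) gf -(Defs.compA _ _ _ _ _ g' f') gf'.
  by rewrite !comp0m !compm0 addr0.
- move=> X h hf.
  have [k1 e1] : exists k1 : Hom C X, h \oc bin1 = k1 \oc g.
    by apply: Hc; rewrite Defs.compA -(dsum_in1 f f') -Defs.compA hf comp0m.
  have [k2 e2] : exists k2 : Hom C' X, h \oc bin2 = k2 \oc g'.
    by apply: Hc'; rewrite Defs.compA -(dsum_in2 f f') -Defs.compA hf comp0m.
  exists (k1 \oc bpr1 + k2 \oc bpr2).
  by rewrite compDl !Defs.compA pr1_dsum pr2_dsum -!Defs.compA -e1 -e2 bsum_eta_out.
- move=> X h gh.
  have [k1 e1] : exists k1 : Hom X A, bpr1 \oc h = f \oc k1.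
    by apply: Hk; rewrite -Defs.compA -(pr1_dsum g g') Defs.compA gh compm0.
  have [k2 e2] : exists k2 : Hom X A', bpr2 \oc h = f' \oc k2.
    by apply: Hk'; rewrite -Defs.compA -(pr2_dsum g g') Defs.compA gh compm0.
  exists (bin1 \oc k1 + bin2 \oc k2).
  by rewrite compDr -!Defs.compA dsum_in1 dsum_in2 !Defs.compA -e1 -e2 bsum_eta_in.
Qed.

(* Weak kernels and cokernels become genuine ones once f is monic and g epic:
   monicity (epicity) makes the factorization unique. *)
Lemma kc_pair_of_wkc {A B C : Ac} (f : Hom A B) (g : Hom B C) :
  wkc_pair f g -> is_mono f -> is_epi g -> is_kc_pair f g.
Proof.
move=> [gf [Hc Hk]] mf eg; split; split=> // X h H.
- by have [k ->] := Hk _ _ H; exists k; split=> // k' /mf ->.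
- by have [k ->] := Hc _ _ H; exists k; split=> // k' /eg ->.
Qed.

Lemma pushout_unique {A B A' B1 B2 : Ac} (i : Hom A B) (a : Hom A A')
    (i1 : Hom A' B1) (b1 : Hom B B1) (i2 : Hom A' B2) (b2 : Hom B B2) :
  is_pushout i a i1 b1 -> is_pushout i a i2 b2 ->
  exists th : Hom B1 B2, is_iso th /\ th \oc i1 = i2.
Proof.
move=> [e1 U1] [e2 U2].
have [th [[thb thi] _]] := U1 _ b2 i2 (esym e2).
have [th' [[thb' thi'] _]] := U2 _ b1 i1 (esym e1).
have [w1 [_ endo1]] := U1 _ b1 i1 (esym e1).
have [w2 [_ endo2]] := U2 _ b2 i2 (esym e2).
exists th; split=> //; exists th'; split.
- rewrite -(endo1 (th' \oc th)); last by rewrite !Defs.compA thb thi.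
  by apply: endo1; rewrite !comp1m.
- rewrite -(endo2 (th \oc th')); last by rewrite !Defs.compA thb' thi'.
  by apply: endo2; rewrite !comp1m.
Qed.

Lemma pullback_unique {B C C' B1 B2 : Ac} (d : Hom B C) (c : Hom C' C)
    (d1 : Hom B1 C') (b1 : Hom B1 B) (d2 : Hom B2 C') (b2 : Hom B2 B) :
  is_pullback d c d1 b1 -> is_pullback d c d2 b2 ->
  exists th : Hom B1 B2, is_iso th /\ d2 \oc th = d1.
Proof.
move=> [e1 U1] [e2 U2].
have [th [[thb thi] _]] := U2 _ b1 d1 e1.
have [th' [[thb' thi'] _]] := U1 _ b2 d2 e2.
have [w1 [_ endo1]] := U1 _ b1 d1 e1.
have [w2 [_ endo2]] := U2 _ b2 d2 e2.
exists th; split=> //; exists th'; split.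
- rewrite -(endo1 (th' \oc th)); last by rewrite -!Defs.compA thb' thi'.
  by apply: endo1; rewrite !compm1.
- rewrite -(endo2 (th \oc th')); last by rewrite -!Defs.compA thb thi.
  by apply: endo2; rewrite !compm1.
Qed.

End AdditiveCalculus.

Section BifunctorCalculus.
Context {Ac : AddCat} {E : AddBifunctor Ac}.

Lemma Epush0m {C A A' : Ac} (x : Ex E C A) : Epush (0 : Hom A A') x = 0.
Proof.
have H := Epush_addm _ E C A A' 0 0 x; rewrite addr0 in H.
by apply: (addrI (Epush (0 : Hom A A') x)); rewrite addr0 -H.
Qed.

Lemma Epull0m {C' C A : Ac} (x : Ex E C A) : Epull (0 : Hom C' C) x = 0.
Proof.
have H := Epull_addm _ E C' C A 0 0 x; rewrite addr0 in H.
by apply: (addrI (Epull (0 : Hom C' C) x)); rewrite addr0 -H.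
Qed.

Lemma Epushm0 {C A A' : Ac} (a : Hom A A') : Epush a (0 : Ex E C A) = 0.
Proof.
have H := Epush_add _ E C A A' a 0 0; rewrite addr0 in H.
by apply: (addrI (Epush a (0 : Ex E C A))); rewrite addr0 -H.
Qed.

Lemma Epullm0 {C' C A : Ac} (c : Hom C' C) : Epull c (0 : Ex E C A) = 0.
Proof.
have H := Epull_add _ E C' C A c 0 0; rewrite addr0 in H.
by apply: (addrI (Epull c (0 : Ex E C A))); rewrite addr0 -H.
Qed.

Definition ext_dsum {A C A' C' : Ac} (d : Ex E C A) (d' : Ex E C' A') :
    Ex E (bsum C C') (bsum A A') :=
  Epush bin1 (Epull bpr1 d) + Epush bin2 (Epull bpr2 d').

Lemma ext_dsum_in1 {A C A' C' : Ac} (d : Ex E C A) (d' : Ex E C' A') :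
  Epush bin1 d = Epull bin1 (ext_dsum d d').
Proof.
rewrite /ext_dsum (Epull_add _ E) -!Epush_pull -!(Epull_comp _ E) bpr1in1 bpr2in1.
by rewrite Epull0m Epushm0 addr0 (Epull_id _ E).
Qed.

Lemma ext_dsum_in2 {A C A' C' : Ac} (d : Ex E C A) (d' : Ex E C' A') :
  Epush bin2 d' = Epull bin2 (ext_dsum d d').
Proof.
rewrite /ext_dsum (Epull_add _ E) -!Epush_pull -!(Epull_comp _ E) bpr2in2 bpr1in2.
by rewrite Epull0m Epushm0 add0r (Epull_id _ E).
Qed.

Lemma ext_dsum_pr1 {A C A' C' : Ac} (d : Ex E C A) (d' : Ex E C' A') :
  Epush bpr1 (ext_dsum d d') = Epull bpr1 d.
Proof.
rewrite /ext_dsum (Epush_add _ E) -!(Epush_comp _ E) bpr1in1 bpr1in2.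
by rewrite Epush0m addr0 (Epush_id _ E).
Qed.

Lemma ext_dsum_pr2 {A C A' C' : Ac} (d : Ex E C A) (d' : Ex E C' A') :
  Epush bpr2 (ext_dsum d d') = Epull bpr2 d'.
Proof.
rewrite /ext_dsum (Epush_add _ E) -!(Epush_comp _ E) bpr2in2 bpr2in1.
by rewrite Epush0m add0r (Epush_id _ E).
Qed.

End BifunctorCalculus.

Ltac bsum_simpl :=
  do 3 rewrite ?compDl ?compDr ?compNm ?compmN ?Defs.compA ?pr1_in1 ?pr2_in2
    ?pr1_in2 ?pr2_in1 ?bpr1in1 ?bpr2in2 ?bpr1in2 ?bpr2in1 ?comp0m ?compm0
    ?comp1m ?compm1 ?addr0 ?add0r ?oppr0.

Section WeaklyExtriangulated.
Variables (Ac : AddCat) (E : AddBifunctor Ac) (s : realization E).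
Hypothesis s_wext : weakly_extriangulated s.

Lemma realization_exists {A C : Ac} (delta : Ex E C A) :
  exists (B : Ac) (f : Hom A B) (g : Hom B C), realizes s delta f g.
Proof. by case: s_wext => [[[Hex _] _] _]; apply: Hex. Qed.

Lemma realization_wkc {A B C : Ac} {delta : Ex E C A} {f : Hom A B} {g : Hom B C} :
  realizes s delta f g -> wkc_pair f g.
Proof. by case: s_wext => [[[_ [Hw _]] _] _] /Hw /wkc_pair_of_weak. Qed.

Lemma realization_equiv_closed {A B B' C : Ac} {delta : Ex E C A}
    {f : Hom A B} {g : Hom B C} (f' : Hom A B') (g' : Hom B' C) :
  realizes s delta f g -> equiv_seq f g f' g' -> realizes s delta f' g'.
Proof. by case: s_wext => [[[_ [_ [_ [Hcl _]]]] _] _]; apply: Hcl. Qed.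

Lemma realization_lift {A C A' C' : Ac} {delta : Ex E C A} {rho : Ex E C' A'}
    {a : Hom A A'} {c : Hom C C'} {B B' : Ac}
    {f : Hom A B} {g : Hom B C} {f' : Hom A' B'} {g' : Hom B' C'} :
  Epush a delta = Epull c rho ->
  realizes s delta f g -> realizes s rho f' g' ->
  exists b : Hom B B', b \oc f = f' \oc a /\ g' \oc b = c \oc g.
Proof.
by case: s_wext => [[[_ [_ [_ [_ HR0]]]] _] _] mor R R'; apply: HR0 mor _ _ _ _ _ _ R R'.
Qed.

(* Realizations of isomorphic extensions are isomorphic: the two lifts given
   by (R0) compose to endomorphisms fixing the outer maps. *)
Lemma realization_iso_lift {A B C A' B' C' : Ac} {delta : Ex E C A}
    {rho : Ex E C' A'} {f : Hom A B} {g : Hom B C} {f' : Hom A' B'} {g' : Hom B' C'}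
    {a : Hom A A'} {c : Hom C C'} :
  is_iso a -> is_iso c -> Epush a delta = Epull c rho ->
  realizes s delta f g -> realizes s rho f' g' ->
  exists b : Hom B B', is_iso b /\ b \oc f = f' \oc a /\ g' \oc b = c \oc g.
Proof.
move=> [ai [ai1 ai2]] [ci [ci1 ci2]] mor R1 R2.
have [b1 [b1f gb1]] := realization_lift mor R1 R2.
have mor_inv : Epush ai rho = Epull ci delta.
  rewrite -[rho](Epull_id _ E) -ci2 (Epull_comp _ E) Epush_pull -mor.
  by rewrite -(Epush_comp _ E) ai1 (Epush_id _ E).
have [b2 [b2f gb2]] := realization_lift mor_inv R2 R1.
exists b1; split=> //.
apply: (wkc_comparison_iso b1 b2 (realization_wkc R1) (realization_wkc R2)).
- by rewrite Defs.compA b1f -Defs.compA b2f Defs.compA ai1 compm1.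
- by rewrite -Defs.compA gb2 Defs.compA gb1 -Defs.compA ci1 comp1m.
- by rewrite Defs.compA b2f -Defs.compA b1f Defs.compA ai2 compm1.
- by rewrite -Defs.compA gb1 Defs.compA gb2 -Defs.compA ci2 comp1m.
Qed.

(* Conflations are closed under isomorphisms of sequences: realize
   a_* (ci^* delta), compare with the given conflation via
   [realization_iso_lift], and transport along b. *)
Lemma conflations_iso_closed (A B C A' B' C' : Ac) (f : Hom A B) (g : Hom B C)
    (f' : Hom A' B') (g' : Hom B' C') (a : Hom A A') (b : Hom B B') (c : Hom C C') :
  conflations s f g -> is_iso a -> is_iso b -> is_iso c ->
  b \oc f = f' \oc a -> c \oc g = g' \oc b -> conflations s f' g'.
Proof.
move=> [d R] Ia Ib Ic bf cg.
have [ai [ai1 ai2]] := Ia; have [ci [ci1 ci2]] := Ic.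
pose d' := Epush a (Epull ci d).
have [B'' [f'' [g'' R'']]] := realization_exists d'.
have mor : Epush a d = Epull c d'.
  by rewrite /d' -Epush_pull -(Epull_comp _ E) ci1 (Epull_id _ E).
have [b1 [[b1i [b1i1 b1i2]] [b1f gb1]]] := realization_iso_lift Ia Ic mor R R''.
exists d'; apply: (realization_equiv_closed R''); exists (b \oc b1i); split.
  by apply: iso_comp => //; exists b1.
split.
- have -> : f'' = b1 \oc f \oc ai by rewrite b1f Defs.compA ai2 compm1.
  rewrite !Defs.compA -(Defs.compA _ _ _ _ _ b1i) b1i1 comp1m.
  by rewrite -Defs.compA bf Defs.compA ai2 compm1.
- have -> : g'' = c \oc g \oc b1i by rewrite -gb1 Defs.compA b1i2 compm1.
  by rewrite -Defs.compA -cg.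
Qed.

(* Conflations are closed under direct sums: a realization of d (+) d' is
   compared with the direct sum sequence by the lifts of the injections and
   projections; these assemble into maps both ways, isomorphisms by rigidity. *)
Lemma conflations_dsum (A B C A' B' C' : Ac) (f : Hom A B) (g : Hom B C)
    (f' : Hom A' B') (g' : Hom B' C') :
  conflations s f g -> conflations s f' g' ->
  conflations s (dsum_map f f') (dsum_map g g').
Proof.
move=> [d R] [d' R'].
have [M [F [G RM]]] := realization_exists (ext_dsum d d').
have [b1 [b1f Gb1]] := realization_lift (ext_dsum_in1 d d') R RM.
have [b2 [b2f Gb2]] := realization_lift (ext_dsum_in2 d d') R' RM.
have [c1 [c1F gc1]] := realization_lift (ext_dsum_pr1 d d') RM R.
have [c2 [c2F gc2]] := realization_lift (ext_dsum_pr2 d d') RM R'.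
pose phi : Hom (bsum B B') M := b1 \oc bpr1 + b2 \oc bpr2.
pose psi : Hom M (bsum B B') := bin1 \oc c1 + bin2 \oc c2.
have psiF : psi \oc F = dsum_map f f'.
  by rewrite /psi compDl !Defs.compA c1F c2F /dsum_map !Defs.compA.
have gpsi : dsum_map g g' \oc psi = G.
  by rewrite /psi compDr -!Defs.compA dsum_in1 dsum_in2 !Defs.compA gc1 gc2 bsum_eta_in.
have phif : phi \oc dsum_map f f' = F.
  by rewrite /phi compDl !Defs.compA pr1_dsum pr2_dsum -!Defs.compA b1f b2f bsum_eta_out.
have Gphi : G \oc phi = dsum_map g g'.
  by rewrite /phi compDr -!Defs.compA Gb1 Gb2 /dsum_map.
exists (ext_dsum d d'); apply: (realization_equiv_closed RM); exists psi; split=> //.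
apply: (wkc_comparison_iso psi phi (realization_wkc RM)
          (wkc_dsum (realization_wkc R) (realization_wkc R'))).
- by rewrite Defs.compA psiF phif.
- by rewrite -Defs.compA Gphi gpsi.
- by rewrite Defs.compA phif psiF.
- by rewrite -Defs.compA gpsi Gphi.
Qed.

(* By (R2), identities are inflations and deflations. *)
Lemma idm_adm_monic (A : Ac) : adm_monic (conflations s) (idm A).
Proof. by case: s_wext => [[_ [_ [R2 _]]] _]; exists zobj, 0, 0; apply: R2. Qed.

Lemma idm_adm_epic (A : Ac) : adm_epic (conflations s) (idm A).
Proof. by case: s_wext => [[_ [_ [_ R2]]] _]; exists zobj, 0, 0; apply: R2. Qed.

Hypothesis inflation_mono :
  forall (A B : Ac) (f : Hom A B), is_inflation s f -> is_mono f.
Hypothesis deflation_epi :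
  forall (B C : Ac) (g : Hom B C), is_deflation s g -> is_epi g.

Lemma conflation_kc_pair (A B C : Ac) (f : Hom A B) (g : Hom B C) :
  conflations s f g -> is_kc_pair f g.
Proof.
move=> [d R]; apply: (kc_pair_of_wkc (realization_wkc R)).
- by apply: inflation_mono; exists C, d, g.
- by apply: deflation_epi; exists A, d, f.
Qed.

(* (EA2)^op compares a realization of delta with one of a_* delta; the
   mapping cocone is a conflation, and its cokernel property makes the
   comparison square a pushout (uniqueness: the cocone deflation is epic). *)
Lemma conflation_pushout {A B C A' : Ac} {delta : Ex E C A}
    {i : Hom A B} {d : Hom B C} (a : Hom A A') :
  realizes s delta i d ->
  exists (B' : Ac) (i' : Hom A' B') (d' : Hom B' C) (b : Hom B B'),
    realizes s (Epush a delta) i' d' /\ is_pushout i a i' b.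
Proof.
move=> R; have [_ [_ EA2op]] := s_wext.
have [B' [i' [d' R']]] := realization_exists (Epush a delta).
have [b [bi [db Rcocone]]] := EA2op _ _ _ _ _ _ _ _ _ _ _ R R'.
exists B', i', d', b; split=> //; split; first by rewrite bi.
move=> X u v uv; have [_ [factor _]] := realization_wkc Rcocone.
pose h : Hom (bsum B A') X := u \oc bpr1 + v \oc bpr2.
have [k hk] : exists k : Hom B' X, h = k \oc cocone_r b i'.
  by apply: factor; rewrite /h /cocone_l; bsum_simpl; rewrite uv addNr.
have kb : k \oc b = u.
  by have := congr1 (fun z => z \oc bin1) hk; rewrite /h /cocone_r /=; bsum_simpl => ->.
have ki : k \oc i' = v.
  by have := congr1 (fun z => z \oc bin2) hk; rewrite /h /cocone_r /=; bsum_simpl => ->.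
exists k; split=> // w [wb wi].
have epi_cocone : is_epi (cocone_r b i').
  by apply: deflation_epi; exists A, (Epull d' delta), (cocone_l i a).
apply: epi_cocone.
by rewrite -hk /h /cocone_r; bsum_simpl; rewrite -!Defs.compA wb wi.
Qed.

(* Pushouts of inflations exist, and any pushout of an inflation is an
   inflation, being isomorphic to the one built from (EA2)^op. *)
Lemma pushouts_of_inflations (A B A' : Ac) (i : Hom A B) (a : Hom A A') :
  adm_monic (conflations s) i ->
  (exists (B' : Ac) (i' : Hom A' B') (b : Hom B B'), is_pushout i a i' b) /\
  (forall (B' : Ac) (i' : Hom A' B') (b : Hom B B'),
      is_pushout i a i' b -> adm_monic (conflations s) i').
Proof.
move=> [C [d [delta R]]].
have [B1 [i1 [d1 [b1 [R1 P1]]]]] := conflation_pushout a R.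
split; first by exists B1, i1, b1.
move=> B2 i2 b2 P2.
have [th [[thi [thi1 thi2]] thE]] := pushout_unique P1 P2.
exists C, (d1 \oc thi), (Epush a delta).
apply: (realization_equiv_closed R1); exists th; split; first by exists thi.
by split=> //; rewrite Defs.compA thi1 compm1.
Qed.

(* Dually, (EA2) makes the comparison between realizations of c^* rho and
   rho a pullback square; uniqueness uses that the cone inflation is monic. *)
Lemma conflation_pullback {A B C C' : Ac} {rho : Ex E C A}
    {i : Hom A B} {d : Hom B C} (c : Hom C' C) :
  realizes s rho i d ->
  exists (P : Ac) (f : Hom A P) (g : Hom P C') (b : Hom P B),
    realizes s (Epull c rho) f g /\ is_pullback d c g b.
Proof.
move=> R; have [_ [EA2 _]] := s_wext.
have [P [f [g R']]] := realization_exists (Epull c rho).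
have [b [bf [db Rcone]]] := EA2 _ _ _ _ _ _ _ _ _ _ _ R' R.
exists P, f, g, b; split=> //; split=> // X u v uv.
have [_ [_ factor]] := realization_wkc Rcone.
pose h : Hom X (bsum C' B) := bin1 \oc (- v) + bin2 \oc u.
have [k hk] : exists k : Hom X P, h = cone_l g b \oc k.
  by apply: factor; rewrite /h /cone_r; bsum_simpl; rewrite uv addNr.
have kb : b \oc k = u.
  by have := congr1 (fun z => bpr2 \oc z) hk; rewrite /h /cone_l /=; bsum_simpl => ->.
have kg : g \oc k = v.
  by have := congr1 (fun z => bpr1 \oc z) hk; rewrite /h /cone_l /=; bsum_simpl => /oppr_inj ->.
exists k; split=> // w [wb wg].
have mono_cone : is_mono (cone_l g b).
  by apply: inflation_mono; exists C, (Epush f rho), (cone_r c d).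
apply: mono_cone.
by rewrite -hk /h /cone_l; bsum_simpl; rewrite wb wg.
Qed.

Lemma pullbacks_of_deflations (B C C' : Ac) (d : Hom B C) (c : Hom C' C) :
  adm_epic (conflations s) d ->
  (exists (B' : Ac) (d' : Hom B' C') (b : Hom B' B), is_pullback d c d' b) /\
  (forall (B' : Ac) (d' : Hom B' C') (b : Hom B' B),
      is_pullback d c d' b -> adm_epic (conflations s) d').
Proof.
move=> [A [i [rho R]]].
have [P [f [g [b [R1 P1]]]]] := conflation_pullback c R.
split; first by exists P, g, b.
move=> B2 d2 b2 P2.
have [th [Ith thE]] := pullback_unique P1 P2.
exists A, (th \oc f), (Epull c rho).
by apply: (realization_equiv_closed R1); exists th.
Qed.

End WeaklyExtriangulated.

Theorem mainTheorem11 (Ac : AddCat) (E : AddBifunctor Ac) (s : realization E) :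
  weakly_extriangulated s ->
  (forall (A B : Ac) (f : Hom A B), is_inflation s f -> is_mono f) ->
  (forall (B C : Ac) (g : Hom B C), is_deflation s g -> is_epi g) ->
  weakly_exact (conflations s).
Proof.
move=> wext mono epi.
split; first exact: conflation_kc_pair wext mono epi.
split; first exact: conflations_iso_closed wext.
split; first exact: conflations_dsum wext.
split; first exact: idm_adm_monic wext.
split; first exact: idm_adm_epic wext.
split; first exact: pushouts_of_inflations wext epi.
exact: pullbacks_of_deflations wext mono.
Qed.
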